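(* Let $G=(V,D)$ be a directed graph whose model has dimension $|D|+1$, and let $J=J(\psi_G)$. Suppose $G$ is not complete. Let $i\in V$, and let $S$ be any set of $|D|+1$ columns of $J$ containing no column $K_{ij}$ with $j\in V$ (including $K_{ii}$). Then $\mathrm{rank}(J_S)\le|D|-|\mathrm{ch}(i)|+1$.
   Context: A directed graph $G=(V,D)$ has edge set $D\subseteq V\times V$ of ordered pairs $(i,j)$, $i\neq j$. It is complete if every pair of distinct nodes is adjacent. $\mathrm{ch}(i)$ is the set of children of $i$. $\Lambda$ is the $V\times V$ matrix with indeterminate entries $\lambda_{ij}$ for $(i,j)\in D$ and zeros elsewhere, and $s$ is a further indeterminate. Let $\psi_G(\Lambda,s)=s(I-\Lambda)(I-\Lambda)^T=K$. The model of $G$ is the image of $\psi_G$ over real $\Lambda$ with $I-\Lambda$ invertible and $s>0$; its dimension is that of its Zariski closure, equivalently the generic rank of the Jacobian. The transposed Jacobian $J(\psi_G)$ has rows indexed by $\{\lambda_{kl}:(k,l)\in D\}\cup\{s\}$ and columns indexed by $K_{ij}$ (with $K_{ij}=K_{ji}$), with entries $\partial K_{ij}/\partial\theta$. $J_S$ is the submatrix on the columns in $S$, and rank means rank over $\mathbb{R}(\lambda,s)$. *)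

From HB Require Import structures.
From mathcomp Require Import all_boot all_order all_algebra.
From mathcomp Require Import fraction.
From mathcomp.multinomials Require Import mpoly.
Set Implicit Arguments. Unset Strict Implicit. Unset Printing Implicit Defensive.
Import Order.TTheory GRing.Theory Num.Theory.
Local Open Scope ring_scope.

Definition loopless (n : nat) (D : {set 'I_n * 'I_n}) : Prop :=
  forall v : 'I_n, (v, v) \notin D.

Definition complete (n : nat) (D : {set 'I_n * 'I_n}) : Prop :=
  forall a b : 'I_n, a != b -> ((a, b) \in D) || ((b, a) \in D).

Definition ch (n : nat) (D : {set 'I_n * 'I_n}) (i : 'I_n) : {set 'I_n} :=
  [set j | (i, j) \in D].

(* Indeterminates: #|D|.+1 variables; the k-th edge (in enum order) of D
   gets the variable 'X_(widen k) = lambda_{e_k}, and the last variable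
   'X_(ord_max) is s. *)
Notation nvars D := (#|D|.+1).

Definition lam_var (n : nat) (D : {set 'I_n * 'I_n}) (k : 'I_#|D|) : 'I_(nvars D) :=
  widen_ord (leqnSn _) k.

Definition s_var (n : nat) (D : {set 'I_n * 'I_n}) : 'I_(nvars D) := ord_max.

(* The matrix Lambda: lambda_{ij} at (i,j) for (i,j) in D, 0 elsewhere. *)
Definition Lambda (R : realFieldType) (n : nat) (D : {set 'I_n * 'I_n})
  : 'M[{mpoly R[nvars D]}]_n :=
  \matrix_(i, j) \sum_(k < #|D| | enum_val k == (i, j)) 'X_(lam_var k).

Definition Kmat (R : realFieldType) (n : nat) (D : {set 'I_n * 'I_n})
  : 'M[{mpoly R[nvars D]}]_n :=
  'X_(s_var D) *: ((1%:M - Lambda R D) *m (1%:M - Lambda R D)^T).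

(* Columns of J are indexed by the entries K_{ij} with K_{ij} = K_{ji};
   we represent them by pairs (i,j) with i <= j. *)
Definition columns (n : nat) : {set 'I_n * 'I_n} :=
  [set p : 'I_n * 'I_n | (p.1 <= p.2)%N].

(* J_S : the submatrix of the transposed Jacobian J(psi_G) on the columns in
   S, with rows indexed by the parameters (lambda_{kl} for (k,l) in D, and s),
   and entries dK_{ij}/dtheta, viewed over the field of rational functions
   R(lambda, s) = {fraction {mpoly R[#|D|.+1]}}. *)
Definition JS (R : realFieldType) (n : nat) (D : {set 'I_n * 'I_n})
  (S : {set 'I_n * 'I_n})
  : 'M[{fraction {mpoly R[nvars D]}}]_(nvars D, #|S|) :=
  \matrix_(r, c) (tofrac (mderiv r (Kmat R D (enum_val c).1 (enum_val c).2))).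

(* Dimension of the model = generic rank of the (full) Jacobian. *)
Definition model_dim (R : realFieldType) (n : nat) (D : {set 'I_n * 'I_n}) : nat :=
  \rank (JS R D (columns n)).

From HB Require Import structures.
From mathcomp Require Import all_boot all_order all_algebra.
From mathcomp Require Import fraction zify.
From mathcomp.multinomials Require Import mpoly.
Set Implicit Arguments.
Unset Strict Implicit.
Unset Printing Implicit Defensive.
Import Order.TTheory GRing.Theory Num.Theory.
Local Open Scope ring_scope.

(* For an edge e = (i, j), lambda_e occurs in (I - Lambda)_{ac} only when
   a = i, so no entry K_{ab} with a, b <> i depends on it: the rows of J_S
   indexed by the out-edges of i vanish, and the rank of J_S is at most the
   number of remaining rows, |D| + 1 - |ch(i)|. *)

Lemma mxrank_zero_rows (F : fieldType) (m n : nat) (A : 'M[F]_(m, n))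
    (Z : {set 'I_m}) :
  (forall r, r \in Z -> row r A = 0) -> (\rank A <= m - #|Z|)%N.
Proof.
move=> rowZ; pose C := rowsub (@enum_val _ (mem (~: Z))) A.
have sub_AC : (A <= C)%MS.
  apply/row_subP => r; have [rZ | rNZ] := boolP (r \in Z).
    by rewrite rowZ // sub0mx.
  have rW : r \in ~: Z by rewrite inE.
  by rewrite -(enum_rankK_in rW rW) -row_rowsub row_sub.
rewrite (leq_trans (mxrankS sub_AC)) // (leq_trans (rank_leq_row C)) //.
by rewrite -[m in (_ <= m - _)%N]card_ord -(cardsC Z) addKn.
Qed.

Section Derivatives.

Variables (R : realFieldType) (n : nat) (D : {set 'I_n * 'I_n}).

Lemma lam_var_inj : injective (@lam_var n D).
Proof. by move=> k l /(congr1 val) /= /val_inj. Qed.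

Lemma lam_var_neq_s_var (k : 'I_#|D|) : lam_var k != s_var D.
Proof. by rewrite -val_eqE /= neq_ltn ltn_ord. Qed.

Lemma mderivX_neq (v w : 'I_(nvars D)) :
  v != w -> mderiv v ('X_w : {mpoly R[nvars D]}) = 0.
Proof. by move=> vw; rewrite mderivX mnm1E eq_sym (negbTE vw) scale0r. Qed.

Lemma mderiv_Lambda_eq0 (k : 'I_#|D|) (a c : 'I_n) :
  (enum_val k).1 != a -> mderiv (lam_var k) (Lambda R D a c) = 0.
Proof.
move=> ka; rewrite mxE raddf_sum big1 // => l /eqP lac.
apply: mderivX_neq; apply: contra ka => /eqP /lam_var_inj ->.
by rewrite lac.
Qed.

Lemma mderiv_IminusLambda_eq0 (k : 'I_#|D|) (a c : 'I_n) :
  (enum_val k).1 != a -> mderiv (lam_var k) ((1%:M - Lambda R D) a c) = 0.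
Proof.
move=> ka; rewrite mxE mderivD [(- Lambda _ _) _ _]mxE mderivN.
rewrite mderiv_Lambda_eq0 // oppr0 addr0 mxE.
by case: (a == c); rewrite ?mulr1n ?mulr0n -?mpolyC1 -?mpolyC0 mderivC.
Qed.

Lemma mderiv_Kmat_eq0 (k : 'I_#|D|) (a b : 'I_n) :
  (enum_val k).1 != a -> (enum_val k).1 != b ->
  mderiv (lam_var k) (Kmat R D a b) = 0.
Proof.
move=> ka kb; rewrite mxE; apply: (etrans (mderivM _ _ _)).
rewrite mderivX_neq ?lam_var_neq_s_var // mul0r add0r.
rewrite mxE raddf_sum big1 ?mulr0 // => c _.
apply: (etrans (mderivM _ _ _)).
by rewrite [(_^T) _ _]mxE !mderiv_IminusLambda_eq0 // mul0r mulr0 addr0.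
Qed.

End Derivatives.

Lemma card_ch (n : nat) (D : {set 'I_n * 'I_n}) (i : 'I_n) :
  #|ch D i| = #|[set k : 'I_#|D| | (enum_val k).1 == i]|.
Proof.
set E := [set k | _].
have head_inj : {in E &, injective (fun k => (enum_val k).2)}.
  move=> k l; rewrite !inE => /eqP ki /eqP li kl; apply: enum_val_inj.
  by rewrite [enum_val k]surjective_pairing [enum_val l]surjective_pairing ki li kl.
rewrite -(card_in_imset head_inj); congr #|pred_of_set _|; apply/setP => j.
rewrite inE; apply/idP/imsetP => [ijD | [k]].
  by exists (enum_rank_in ijD (i, j)); rewrite ?inE enum_rankK_in.
by rewrite inE => /eqP <- ->; rewrite -surjective_pairing enum_valP.
Qed.

Theorem lemma4p1 (R : realFieldType) (n : nat) (D : {set 'I_n * 'I_n})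
  (HD : loopless D)
  (Hdim : model_dim R D = #|D|.+1)
  (Hnc : ~ complete D)
  (i : 'I_n) (S : {set 'I_n * 'I_n})
  (HScol : S \subset columns n)
  (HScard : #|S| = #|D|.+1)
  (HSi : forall p, p \in S -> (p.1 != i) && (p.2 != i)) :
  (\rank (JS R D S) <= #|D| - #|ch D i| + 1)%N.
Proof.
pose Z := [set lam_var k | k in [set k : 'I_#|D| | (enum_val k).1 == i]].
have rowZ r : r \in Z -> row r (JS R D S) = 0.
  case/imsetP=> k; rewrite inE => /eqP ki ->; apply/rowP => c.
  have /andP[c1i c2i] := HSi _ (enum_valP c).
  by rewrite [RHS]mxE mxE /JS mxE mderiv_Kmat_eq0 ?rmorph0 // ki eq_sym.
have cardZ : #|Z| = #|ch D i| by rewrite (card_imset _ (@lam_var_inj _ _)) card_ch.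
by have := mxrank_zero_rows rowZ; rewrite cardZ; lia.
Qed.
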